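(* Let $\mathcal D_{st}=(D,<_{st},\rho)$ and $\mathcal D_{wk}=(D,<_{wk},\rho)$ be two computable partially ordered sets on the same set $D$ such that $<_{st}$ extends $<_{wk}$. Then $K^{\mathcal D_{st}}_{\min}\le_{ct}K^{\mathcal D_{wk}}_{\min}$ and $K^{\mathcal D_{st}}_{\max}\le_{ct}K^{\mathcal D_{wk}}_{\max}$.
   Context: A computable partially ordered set is a triple $\mathcal D=(D,<,\rho)$ where $\rho:\mathbb N\to D$ is a bijection and $<$ is a strict partial order on $D$ with $\{(m,n):\rho(m)<\rho(n)\}$ computable; a partial function into $D$ is partial computable if its composition with $\rho^{-1}$ is. For a partial $f:\{0,1\}^*\times\mathbb N\to D$ monotone increasing in its second argument on its domain, $\max^{\mathcal D}f$ is the partial function defined exactly at those $p$ for which $\{f(p,t):t,\ f(p,t)\text{ defined}\}$ is finite and non-empty, with value its maximum. $\mathrm{Max}_{\mathrm{PR}}[\{0,1\}^*\to\mathcal D]$ is the class of all $\max^{\mathcal D}f$ with $f$ partial computable and monotone increasing in its second argument. For partial $\varphi:\{0,1\}^*\to D$, $K_\varphi(d)=\min\{|p|:\varphi(p)=d\}$. $K^{\mathcal D}_{\max}$ is $K_U$ for some $U$ optimal in $\mathrm{Max}_{\mathrm{PR}}[\{0,1\}^*\to\mathcal D]$ (for every $F$ in the class, $K_U\le K_F+c$ wherever $K_F$ is defined, for some $c$); $K^{\mathcal D}_{\min}$ is $K^{\mathcal D'}_{\max}$ for the reverse order $\mathcal D'=(D,>,\rho)$. These are total functions $D\to\mathbb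 N$ defined up to an additive constant. $f\le_{ct}g$ iff $\exists c\,\forall d\ f(d)\le g(d)+c$. *)

From Stdlib Require Import List Arith.
Import ListNotations.

(* Arity is not enforced syntactically (lax arity); this yields        *)
(* exactly the partial computable functions.                           *)
Inductive prf : Type :=
| PZero : prf
| PSucc : prf
| PProj : nat -> prf
| PComp : prf -> list prf -> prf
| PRec  : prf -> prf -> prf
| PMin  : prf -> prf.

Inductive eval : prf -> list nat -> nat -> Prop :=
| eval_zero : forall xs, eval PZero xs 0
| eval_succ : forall x xs, eval PSucc (x :: xs) (S x)
| eval_proj : forall i xs, i < length xs -> eval (PProj i) xs (nth i xs 0)
| eval_comp : forall f gs xs ys y,
    evals gs xs ys -> eval f ys y -> eval (PComp f gs) xs y
| eval_rec0 : forall f g xs y, eval f xs y -> eval (PRec f g) (0 :: xs) y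
| eval_recS : forall f g n xs z y,
    eval (PRec f g) (n :: xs) z -> eval g (n :: z :: xs) y ->
    eval (PRec f g) (S n :: xs) y
| eval_min : forall f xs n,
    eval f (n :: xs) 0 ->
    (forall m, m < n -> exists k, eval f (m :: xs) (S k)) ->
    eval (PMin f) xs n
with evals : list prf -> list nat -> list nat -> Prop :=
| evals_nil : forall xs, evals [] xs []
| evals_cons : forall g gs xs y ys,
    eval g xs y -> evals gs xs ys -> evals (g :: gs) xs (y :: ys).

(* Standard bijective encoding of binary strings {0,1}^* into nat:
   [] |-> 0, b :: s |-> 2 * code s + 1 + b. *)
Fixpoint code (p : list bool) : nat :=
  match p with
  | [] => 0
  | b :: s => 2 * code s + 1 + (if b then 1 else 0)
  end.

Definition bijective {A B : Type} (f : A -> B) : Prop :=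
  (forall x y, f x = f y -> x = y) /\ (forall b, exists a, f a = b).

Definition strict_partial_order {D : Type} (lt : D -> D -> Prop) : Prop :=
  (forall x, ~ lt x x) /\ (forall x y z, lt x y -> lt y z -> lt x z).

Definition rel_computable (R : nat -> nat -> Prop) : Prop :=
  exists e : prf, forall m n,
    (R m n -> eval e [m; n] 1) /\ (~ R m n -> eval e [m; n] 0).

Definition computable_poset {D : Type} (lt : D -> D -> Prop) (rho : nat -> D) : Prop :=
  bijective rho /\ strict_partial_order lt /\
  rel_computable (fun m n => lt (rho m) (rho n)).

Definition rev_order {D : Type} (lt : D -> D -> Prop) : D -> D -> Prop :=
  fun x y => lt y x.

Definition pcomputable1 {D : Type} (rho : nat -> D) (phi : list bool -> option D) : Prop :=
  exists e : prf, forall p y, eval e [code p] y <-> phi p = Some (rho y).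

Definition pcomputable2 {D : Type} (rho : nat -> D)
    (f : list bool -> nat -> option D) : Prop :=
  exists e : prf, forall p t y, eval e [code p; t] y <-> f p t = Some (rho y).

Definition monotone2 {D : Type} (lt : D -> D -> Prop)
    (f : list bool -> nat -> option D) : Prop :=
  forall p t1 t2 d1 d2, t1 <= t2 -> f p t1 = Some d1 -> f p t2 = Some d2 ->
    d1 = d2 \/ lt d1 d2.

(* F = max^D f : defined exactly at those p for which {f(p,t)} is finite and
   non-empty, with value its maximum *)
Definition is_max_of {D : Type} (lt : D -> D -> Prop)
    (f : list bool -> nat -> option D) (F : list bool -> option D) : Prop :=
  forall p d, F p = Some d <->
    ((exists l : list D, forall t d', f p t = Some d' -> In d' l) /\
     (exists t d', f p t = Some d') /\
     (exists t, f p t = Some d) /\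
     (forall t d', f p t = Some d' -> d' = d \/ lt d' d)).

Definition MaxPR {D : Type} (lt : D -> D -> Prop) (rho : nat -> D)
    (F : list bool -> option D) : Prop :=
  exists f, pcomputable2 rho f /\ monotone2 lt f /\ is_max_of lt f F.

Definition Kis {D : Type} (phi : list bool -> option D) (d : D) (k : nat) : Prop :=
  (exists p, phi p = Some d /\ length p = k) /\
  (forall p, phi p = Some d -> k <= length p).

Definition optimal_max {D : Type} (lt : D -> D -> Prop) (rho : nat -> D)
    (U : list bool -> option D) : Prop :=
  MaxPR lt rho U /\
  forall F, MaxPR lt rho F ->
    exists c, forall d k, Kis F d k -> exists kU, Kis U d kU /\ kU <= k + c.

Definition K_le_ct {D : Type} (U V : list bool -> option D) : Prop :=
  exists c, forall d k, Kis V d k -> exists k', Kis U d k' /\ k' <= k + c.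

(* A function [f] that is monotone for [<_wk] is also monotone for any strict
   order [<_st] extending it, and its maximum for [<_wk] is its maximum for
   [<_st]: a later value strictly above the [<_wk]-maximum would contradict
   irreflexivity of [<_st].  Hence Max_PR for [<_wk] is contained in Max_PR for
   [<_st], and an optimal machine for [<_st] dominates every machine of that
   class, in particular an optimal one for [<_wk].  The min case is the same
   argument applied to the reversed orders. *)

From Stdlib Require Import List Arith.

Section OrderExtension.

Variables (D : Type) (lt_wk lt_st : D -> D -> Prop).
Hypothesis lt_st_spo : strict_partial_order lt_st.
Hypothesis lt_wk_sub : forall x y, lt_wk x y -> lt_st x y.

Lemma monotone2_ext (f : list bool -> nat -> option D) :
  monotone2 lt_wk f -> monotone2 lt_st f.
Proof.
  intros Hmono p t1 t2 d1 d2 Hle H1 H2.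
  destruct (Hmono p t1 t2 d1 d2 Hle H1 H2); auto.
Qed.

Lemma upper_bound_ext (f : list bool -> nat -> option D) p t0 d :
  monotone2 lt_wk f -> f p t0 = Some d ->
  (forall t d', f p t = Some d' -> d' = d \/ lt_st d' d) ->
  forall t d', f p t = Some d' -> d' = d \/ lt_wk d' d.
Proof.
  destruct lt_st_spo as [Hirr Htr].
  intros Hmono Ht0 Hub t d' Ht.
  destruct (le_ge_dec t t0) as [Hle | Hge].
  - exact (Hmono p t t0 d' d Hle Ht Ht0).
  - destruct (Hmono p t0 t d d' Hge Ht0 Ht) as [Heq | Hlt]; auto.
    destruct (Hub t d' Ht) as [Heq | Hlt']; auto.
    exfalso; apply (Hirr d), (Htr d d' d); auto.
Qed.

Lemma is_max_of_ext (f : list bool -> nat -> option D) F :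
  monotone2 lt_wk f -> is_max_of lt_wk f F -> is_max_of lt_st f F.
Proof.
  intros Hmono Hmax p d; rewrite (Hmax p d).
  split.
  - intros (Hfin & Hne & Hatt & Hub); repeat split; auto.
    intros t d' Ht; destruct (Hub t d' Ht); auto.
  - intros (Hfin & Hne & [t0 Ht0] & Hub); repeat split; eauto.
    exact (upper_bound_ext f p t0 d Hmono Ht0 Hub).
Qed.

Lemma MaxPR_ext rho F : MaxPR lt_wk rho F -> MaxPR lt_st rho F.
Proof.
  intros (f & Hpc & Hmono & Hmax).
  exists f; split; [exact Hpc |].
  split; [exact (monotone2_ext f Hmono) | exact (is_max_of_ext f F Hmono Hmax)].
Qed.

Lemma optimal_max_K_le_ct_ext rho U_st U_wk :
  optimal_max lt_st rho U_st -> optimal_max lt_wk rho U_wk -> K_le_ct U_st U_wk.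
Proof.
  intros [_ Hopt] [Hwk _].
  exact (Hopt U_wk (MaxPR_ext rho U_wk Hwk)).
Qed.

End OrderExtension.

Lemma strict_partial_order_rev {D : Type} (lt : D -> D -> Prop) :
  strict_partial_order lt -> strict_partial_order (rev_order lt).
Proof.
  intros [Hirr Htr]; split; unfold rev_order; eauto.
Qed.

Theorem mainTheorem16 (D : Type) (rho : nat -> D) (lt_st lt_wk : D -> D -> Prop)
  (Hst : computable_poset lt_st rho) (Hwk : computable_poset lt_wk rho)
  (Hext : forall x y, lt_wk x y -> lt_st x y)
  (Ust_max Uwk_max Ust_min Uwk_min : list bool -> option D)
  (Hst_max : optimal_max lt_st rho Ust_max)
  (Hwk_max : optimal_max lt_wk rho Uwk_max)
  (Hst_min : optimal_max (rev_order lt_st) rho Ust_min)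
  (Hwk_min : optimal_max (rev_order lt_wk) rho Uwk_min) :
  K_le_ct Ust_min Uwk_min /\ K_le_ct Ust_max Uwk_max.
Proof.
  destruct Hst as (_ & Hspo & _).
  split.
  - apply (optimal_max_K_le_ct_ext D (rev_order lt_wk) (rev_order lt_st)
             (strict_partial_order_rev lt_st Hspo)
             (fun x y H => Hext y x H) rho); assumption.
  - exact (optimal_max_K_le_ct_ext D lt_wk lt_st Hspo Hext rho
             Ust_max Uwk_max Hst_max Hwk_max).
Qed.
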